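(* Let $a>0$, $L>0$, $k>0$ and fix $t$. Let $\bar u$, $u(t,\cdot)$ be functions on $[0,L]$ with $u_x(t,\cdot),u_t(t,\cdot)\in L^2(0,L)$ such that $0\le \bar u+u\le \frac a2$ on $[0,L]$. Assume $k$ is large enough that $$M_1:=\min\Big\{\tfrac34 k a^2-a-1,\ k-1\Big\}>0,$$ and define $K_1=\frac{1+2L^2}{M_1}$ and $K_2=\max\{k a^2+a+1,\ k+1\}$. Let $$E_1(t)=\int_0^L k\Big[\big(a^2-(\bar u+u)^2\big)u_x^2+u_t^2\Big]-2\exp\Big(-\tfrac xL\Big)\Big[(\bar u+u)u_x^2+u_tu_x\Big]dx.$$ Then $$M_1\int_0^L(u_t^2+u_x^2)\,dx\le E_1(t)\le K_2\int_0^L(u_t^2+u_x^2)\,dx,$$ and $$\int_0^L\big(u_t^2+(1+2L^2)u_x^2\big)\,dx\le K_1E_1(t).$$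
   Context: Here $u_t,u_x$ denote the partial derivatives of $u(t,x)$ evaluated at the fixed time $t$. *)

From HB Require Import structures.
From mathcomp Require Import all_boot all_order all_algebra.
From mathcomp Require Import all_classical all_reals all_analysis.
Set Implicit Arguments. Unset Strict Implicit. Unset Printing Implicit Defensive.
Import Order.TTheory GRing.Theory Num.Theory numFieldNormedType.Exports.
Local Open Scope classical_set_scope.
Local Open Scope ring_scope.

Definition pdx {R : realType} (u : R -> R -> R) (t x : R) : R :=
  derive1 (fun y => u t y) x.
Definition pdt {R : realType} (u : R -> R -> R) (t x : R) : R :=
  derive1 (fun s => u s x) t.

Definition L2on {R : realType} (D : set R) (f : R -> R) : Prop :=
  measurable_fun D f /\
  (@lebesgue_measure R).-integrable D (fun x => ((f x) ^+ 2)%:E).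

Definition E1 {R : realType} (k L : R) (a : R) (ub : R -> R)
  (u : R -> R -> R) (t : R) : R :=
  Rintegral (@lebesgue_measure R) `[0, L]
    (fun x => k * ((a ^+ 2 - (ub x + u t x) ^+ 2) * (pdx u t x) ^+ 2
                   + (pdt u t x) ^+ 2)
              - 2 * expR (- (x / L)) *
                ((ub x + u t x) * (pdx u t x) ^+ 2 + pdt u t x * pdx u t x)).

(** The integrand of [E1] is a quadratic form in [(u_x, u_t)] whose coefficients are
    controlled pointwise: since [0 <= w := ub + u <= a/2] and [0 < exp(-x/L) <= 1] on
    [[0, L]], one has [k (a^2 - w^2) >= 3/4 k a^2], [2 exp(-x/L) w <= a] and
    [|2 exp(-x/L) u_t u_x| <= u_t^2 + u_x^2].  This sandwiches the integrand between
    [M1 (u_t^2 + u_x^2)] and [K2 (u_t^2 + u_x^2)]; integrating gives the first two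
    bounds, and the third follows from the first since [u_x^2 <= u_t^2 + u_x^2]. *)
From HB Require Import structures.
From mathcomp Require Import all_boot all_order all_algebra.
From mathcomp Require Import all_classical all_reals all_analysis.
From mathcomp Require Import measurable_realfun lra.
Import Order.TTheory GRing.Theory Num.Theory numFieldNormedType.Exports.
Local Open Scope classical_set_scope.
Local Open Scope ring_scope.

Definition energy_density {R : pzRingType} (k a e w p q : R) : R :=
  k * ((a ^+ 2 - w ^+ 2) * p ^+ 2 + q ^+ 2) - 2 * e * (w * p ^+ 2 + q * p).

Lemma E1E {R : realType} (k L a : R) ub u t :
  E1 k L a ub u t = Rintegral (@lebesgue_measure R) `[0, L]
    (fun x => energy_density k a (expR (- (x / L))) (ub x + u t x)
                             (pdx u t x) (pdt u t x)).
Proof. by []. Qed.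

Lemma le_min_max_comb {R : realDomainType} (c d : R) {P Q : R} :
  0 <= P -> 0 <= Q ->
  Num.min c d * (P + Q) <= c * P + d * Q <= Num.max c d * (P + Q).
Proof.
move=> P0 Q0; rewrite !mulrDr; apply/andP; split; apply: lerD.
- by rewrite ler_wpM2r // ge_min lexx.
- by rewrite ler_wpM2r // ge_min lexx orbT.
- by rewrite ler_wpM2r // le_max lexx.
- by rewrite ler_wpM2r // le_max lexx orbT.
Qed.

Lemma energy_density_bounds {R : realFieldType} (k a e w p q : R) :
  0 <= k -> 0 <= w <= a / 2 -> 0 <= e <= 1 ->
  Num.min (3 / 4 * k * a ^+ 2 - a - 1) (k - 1) * (q ^+ 2 + p ^+ 2)
    <= energy_density k a e w p q
    <= Num.max (k * a ^+ 2 + a + 1) (k + 1) * (q ^+ 2 + p ^+ 2).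
Proof.
move=> k0 /andP[w0 wa] /andP[e0 e1].
have p2 : 0 <= p ^+ 2 := sqr_ge0 p.
have q2 : 0 <= q ^+ 2 := sqr_ge0 q.
have kw : 3 / 4 * k * a ^+ 2 <= k * (a ^+ 2 - w ^+ 2).
  have : w ^+ 2 <= a ^+ 2 / 4 by nra.
  nra.
have ew0 : 0 <= 2 * e * w by nra.
have ewa : 2 * e * w <= a by nra.
have slack : 0 <= (1 - e) * (q ^+ 2 + p ^+ 2).
  by rewrite mulr_ge0 ?subr_ge0 ?addr_ge0.
have cross_hi : 2 * e * (q * p) <= q ^+ 2 + p ^+ 2.
  have := mulr_ge0 e0 (sqr_ge0 (q - p)); nra.
have cross_lo : - (q ^+ 2 + p ^+ 2) <= 2 * e * (q * p).
  have := mulr_ge0 e0 (sqr_ge0 (q + p)); nra.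
have /andP[lo _] := le_min_max_comb (3 / 4 * k * a ^+ 2 - a - 1) (k - 1) p2 q2.
have /andP[_ hi] := le_min_max_comb (k * a ^+ 2 + a + 1) (k + 1) p2 q2.
rewrite /energy_density (addrC (q ^+ 2)); apply/andP; split.
- apply: le_trans lo _.
  have := ler_wpM2r p2 kw; have := ler_wpM2r p2 ewa; nra.
- apply: le_trans hi.
  have := mulr_ge0 ew0 p2; have := mulr_ge0 k0 (mulr_ge0 (sqr_ge0 w) p2); nra.
Qed.

Section integral_sandwich.
Context {d} {T : measurableType d} {R : realType}
  {mu : {measure set T -> \bar R}}.
Context {D : set T} {f g : T -> R} {c C : R}.
Hypotheses (mD : measurable D) (mf : measurable_fun D f)
  (ig : mu.-integrable D (EFin \o g)).
Hypotheses (c0 : 0 <= c) (g0 : forall x, D x -> 0 <= g x)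
  (fgC : forall x, D x -> c * g x <= f x <= C * g x).

Let iCg : mu.-integrable D (EFin \o (fun x => C * g x)).
Proof. by apply: eq_integrable mD _ _ _ (integrableZl mD C ig). Qed.

Lemma integrable_sandwich : mu.-integrable D (EFin \o f).
Proof.
apply: (le_integrable mD _ _ iCg); first exact/measurable_EFinP.
move=> x Dx /=; rewrite lee_fin.
have /andP[cf fC] := fgC x Dx.
have f0 : 0 <= f x by apply: le_trans cf; rewrite mulr_ge0 ?g0.
by rewrite !ger0_norm ?(le_trans f0 fC).
Qed.

Lemma Rintegral_sandwich :
  c * Rintegral mu D g <= Rintegral mu D f <= C * Rintegral mu D g.
Proof.
have If := integrable_sandwich.
rewrite -!RintegralZl //; apply/andP; split; apply: le_Rintegral => //.
- by apply: eq_integrable mD _ _ _ (integrableZl mD c ig).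
- by move=> x Dx; have /andP[] := fgC x Dx.
- by move=> x Dx; have /andP[] := fgC x Dx.
Qed.

End integral_sandwich.

Lemma expR_Ndiv_ge0_le1 {R : realType} (L x : R) :
  0 < L -> 0 <= x -> 0 <= expR (- (x / L)) <= 1.
Proof.
move=> L0 x0; rewrite expR_ge0 expR_le1 oppr_le0.
exact: divr_ge0 (ltW L0).
Qed.

Lemma measurable_energy_density {d} {T : measurableType d} {R : realType}
    {D : set T} (k a : R) {e w p q : T -> R} :
  measurable_fun D e -> measurable_fun D w ->
  measurable_fun D p -> measurable_fun D q ->
  measurable_fun D (fun x => energy_density k a (e x) (w x) (p x) (q x)).
Proof.
move=> me mw mp mq; rewrite /energy_density.
repeat first [ exact: measurable_cst | assumption | apply: measurable_funB
             | apply: measurable_funD | apply: measurable_funM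
             | apply: measurable_funX ].
Qed.

Lemma integrable_sqr_add {R : realType} {D : set (measurableTypeR R)}
    {p q : R -> R} :
  measurable D -> L2on D p -> L2on D q ->
  (@lebesgue_measure R).-integrable D (EFin \o (fun x => q x ^+ 2 + p x ^+ 2)).
Proof.
move=> mD [_ ip] [_ iq].
exact: (eq_integrable mD _ _ _ (integrableD mD iq ip)).
Qed.

Theorem lemma1 (R : realType) (a L k t : R) (ub : R -> R) (u : R -> R -> R) :
  0 < a -> 0 < L -> 0 < k ->
  measurable_fun `[0, L] ub ->
  measurable_fun `[0, L] (u t) ->
  L2on `[0, L] (pdx u t) ->
  L2on `[0, L] (pdt u t) ->
  (forall x, x \in `[0, L] -> 0 <= ub x + u t x <= a / 2) ->
  let M1 := Num.min (3 / 4 * k * a ^+ 2 - a - 1) (k - 1) in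
  0 < M1 ->
  let K1 := (1 + 2 * L ^+ 2) / M1 in
  let K2 := Num.max (k * a ^+ 2 + a + 1) (k + 1) in
  let I := Rintegral (@lebesgue_measure R) `[0, L]
             (fun x => (pdt u t x) ^+ 2 + (pdx u t x) ^+ 2) in
  [/\ M1 * I <= E1 k L a ub u t,
      E1 k L a ub u t <= K2 * I &
      Rintegral (@lebesgue_measure R) `[0, L]
        (fun x => (pdt u t x) ^+ 2 + (1 + 2 * L ^+ 2) * (pdx u t x) ^+ 2)
        <= K1 * E1 k L a ub u t].
Proof.
move=> a0 L0 k0 mub mut Lux Lut hw M1 M1_gt0 K1 K2 I.
pose D : set (measurableTypeR R) := `[0, L]%classic.
have mD : measurable D := measurable_itv _.
have iI := integrable_sqr_add mD Lux Lut.
have I_ge0 x : D x -> 0 <= pdt u t x ^+ 2 + pdx u t x ^+ 2.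
  by move=> _; rewrite addr_ge0 ?sqr_ge0.
have mexp : measurable_fun D (fun x : R => expR (- (x / L))).
  apply: measurableT_comp; first exact: measurable_expR.
  apply/measurable_funN/measurable_funM; first exact: measurable_id.
  exact: measurable_cst.
have mdensity := measurable_energy_density k a mexp
  (measurable_funD mub mut) Lux.1 Lut.1.
have density_bounds x : D x ->
    M1 * (pdt u t x ^+ 2 + pdx u t x ^+ 2)
      <= energy_density k a (expR (- (x / L))) (ub x + u t x)
                        (pdx u t x) (pdt u t x)
      <= K2 * (pdt u t x ^+ 2 + pdx u t x ^+ 2).
  move=> Dx; apply: energy_density_bounds; first exact: ltW.
    exact: hw.
  by apply: expR_Ndiv_ge0_le1; move: Dx; rewrite /D /= in_itv => /andP[].
have /andP[lower upper] :=
  Rintegral_sandwich mD mdensity iI (ltW M1_gt0) I_ge0 density_bounds.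
rewrite E1E; split => //.
have mweighted : measurable_fun D
    (fun x => pdt u t x ^+ 2 + (1 + 2 * L ^+ 2) * pdx u t x ^+ 2).
  apply: measurable_funD; first exact: measurable_funX Lut.1.
  by apply: measurable_funM; [exact: measurable_cst | exact: measurable_funX Lux.1].
have c_ge1 : 1 <= 1 + 2 * L ^+ 2 by rewrite lerDl mulr_ge0 ?sqr_ge0.
have weighted_bounds x : D x ->
    1 * (pdt u t x ^+ 2 + pdx u t x ^+ 2)
      <= pdt u t x ^+ 2 + (1 + 2 * L ^+ 2) * pdx u t x ^+ 2
      <= (1 + 2 * L ^+ 2) * (pdt u t x ^+ 2 + pdx u t x ^+ 2).
  move=> _; rewrite mul1r mulrDr lerD2l lerD2r.
  by rewrite !ler_peMl ?sqr_ge0.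
have /andP[_ weighted_le] :=
  Rintegral_sandwich mD mweighted iI ler01 I_ge0 weighted_bounds.
apply: le_trans weighted_le _.
rewrite /K1 -mulrA ler_wpM2l ?ler_pdivlMl //.
exact: le_trans ler01 c_ge1.
Qed.
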